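(* Let $\Delta\ge 4$ and $n\ge \Delta+2$ be integers. Consider the linear program in the real variables $m_{i,j}$, $1\le i\le j\le \Delta$: \[ \max \sum_{1\le i\le j\le \Delta} (i-j)^2\, m_{i,j} \] subject to \[ \sum_{1\le i\le j\le \Delta} \Bigl(\frac{1}{i}+\frac{1}{j}\Bigr) m_{i,j} = n,\qquad \sum_{1\le i\le j\le \Delta} m_{i,j} = n-1,\qquad m_{i,j}\ge 0 \ \text{ for all } 1\le i\le j\le \Delta. \] Then this problem admits a unique optimal solution, namely \[ m_{1,\Delta}=\frac{(\Delta-2)n+(\Delta+2)}{\Delta},\qquad m_{2,\Delta}=\frac{2(n-\Delta-1)}{\Delta}, \] and $m_{i,j}=0$ for all $(i,j)\notin\{(1,\Delta),(2,\Delta)\}$.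
   Context: This linear program is the relaxation of maximizing the $\sigma$-irregularity $\sigma(T)=\sum_{uv\in E(T)}(d(u)-d(v))^2$ over trees $T$ of order $n$ and maximum degree $\Delta$, where $m_{i,j}$ stands for the number of edges joining a vertex of degree $i$ to a vertex of degree $j$. *)

From HB Require Import structures.
From mathcomp Require Import all_boot all_order all_algebra.
Set Implicit Arguments. Unset Strict Implicit. Unset Printing Implicit Defensive.
Import Order.TTheory GRing.Theory Num.Theory.
Local Open Scope ring_scope.

(* A candidate solution assigns a real m i j to each pair of degrees; only the
   pairs 1 <= i <= j <= D are meaningful (the LP variables m_{i,j}). *)

Definition lp_sum (R : realFieldType) (D : nat) (f : nat -> nat -> R) : R :=
  \sum_(1 <= i < D.+1) \sum_(i <= j < D.+1) f i j.

Definition lp_objective (R : realFieldType) (D : nat) (m : nat -> nat -> R) : R :=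
  lp_sum D (fun i j => (i%:R - j%:R) ^+ 2 * m i j).

Definition lp_feasible (R : realFieldType) (D n : nat) (m : nat -> nat -> R) : Prop :=
  [/\ lp_sum D (fun i j => ((i%:R)^-1 + (j%:R)^-1) * m i j) = n%:R,
      lp_sum D (fun i j => m i j) = n%:R - 1
    & forall i j : nat, (1 <= i)%N -> (i <= j)%N -> (j <= D)%N -> 0 <= m i j].

Definition lp_opt (R : realFieldType) (D n : nat) (i j : nat) : R :=
  if (i == 1%N) && (j == D) then
    ((D%:R - 2) * n%:R + (D%:R + 2)) / D%:R
  else if (i == 2%N) && (j == D) then
    2 * (n%:R - D%:R - 1) / D%:R
  else 0.

From HB Require Import structures.
From mathcomp Require Import all_boot all_order all_algebra.
From mathcomp Require Import ring lra zify.
Set Implicit Arguments. Unset Strict Implicit. Unset Printing Implicit Defensive.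
Import Order.TTheory GRing.Theory Num.Theory.
Local Open Scope ring_scope.

(* Weak LP duality with the dual point y1 = 4D - 6, y2 = (D - 1)^2 - (1 + 1/D) y1:
   every slack y1 (1/i + 1/j) + y2 - (i - j)^2 is nonnegative, so a feasible m has
   objective at most y1 n + y2 (n - 1), with equality only if m vanishes wherever
   the slack is positive.  For D >= 4 that is everywhere except (1, D) and (2, D),
   and the two equality constraints then determine m_{1,D} and m_{2,D}. *)

Section NatSums.
Variable R : numDomainType.

Lemma sumr_nat_ge0 a b (F : nat -> R) :
  (forall k, (a <= k < b)%N -> 0 <= F k) -> 0 <= \sum_(a <= k < b) F k.
Proof. by move=> F0; rewrite big_nat_cond; apply: sumr_ge0 => k /andP[/F0]. Qed.

Lemma psumr_nat_eq0P a b (F : nat -> R) :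
  (forall k, (a <= k < b)%N -> 0 <= F k) -> \sum_(a <= k < b) F k = 0 ->
  forall k, (a <= k < b)%N -> F k = 0.
Proof.
move=> F0 /eqP; rewrite big_nat_cond psumr_eq0 => [/allP sum0 k kab|k /andP[/F0 //]].
by apply/eqP; move: (sum0 k); rewrite mem_index_iota kab => /(_ isT).
Qed.

End NatSums.

Section LpSum.
Variables (R : realFieldType) (D : nat).
Implicit Types F G : nat -> nat -> R.

Lemma eq_lp_sum F G :
  (forall i j, (1 <= i)%N -> (i <= j)%N -> (j <= D)%N -> F i j = G i j) ->
  lp_sum D F = lp_sum D G.
Proof.
move=> FG; rewrite /lp_sum big_nat_cond [RHS]big_nat_cond.
apply: eq_bigr => i /andP[/andP[i1 iD] _].
rewrite big_nat_cond [RHS]big_nat_cond; apply: eq_bigr => j /andP[/andP[ij jD] _].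
exact: FG.
Qed.

Lemma lp_sumD F G : lp_sum D (fun i j => F i j + G i j) = lp_sum D F + lp_sum D G.
Proof. by rewrite /lp_sum -big_split; apply: eq_bigr => i _; rewrite big_split. Qed.

Lemma lp_sumB F G : lp_sum D (fun i j => F i j - G i j) = lp_sum D F - lp_sum D G.
Proof. by rewrite /lp_sum -sumrB; apply: eq_bigr => i _; rewrite sumrB. Qed.

Lemma lp_sumZ a F : lp_sum D (fun i j => a * F i j) = a * lp_sum D F.
Proof. by rewrite /lp_sum mulr_sumr; apply: eq_bigr => i _; rewrite mulr_sumr. Qed.

Lemma lp_sum_ge0 F :
  (forall i j, (1 <= i)%N -> (i <= j)%N -> (j <= D)%N -> 0 <= F i j) ->
  0 <= lp_sum D F.
Proof.
move=> F0; apply: sumr_nat_ge0 => i /andP[i1 iD].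
by apply: sumr_nat_ge0 => j /andP[ij jD]; apply: F0.
Qed.

Lemma lp_sum_eq0P F :
  (forall i j, (1 <= i)%N -> (i <= j)%N -> (j <= D)%N -> 0 <= F i j) ->
  lp_sum D F = 0 ->
  forall i j, (1 <= i)%N -> (i <= j)%N -> (j <= D)%N -> F i j = 0.
Proof.
move=> F0 sum0 i j i1 ij jD.
have row_ge0 k : (1 <= k < D.+1)%N -> 0 <= \sum_(k <= l < D.+1) F k l.
  by move=> /andP[k1 kD]; apply: sumr_nat_ge0 => l /andP[kl lD]; apply: F0.
have row0 : \sum_(i <= l < D.+1) F i l = 0.
  by apply: (psumr_nat_eq0P row_ge0 sum0); lia.
by apply: (psumr_nat_eq0P _ row0) => [l /andP[il lD]|]; [apply: F0|]; lia.
Qed.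

Definition lp_support (i j : nat) : bool := ((i == 1) || (i == 2))%N && (j == D).

Lemma lp_sum_support F : (2 <= D)%N ->
  (forall i j, (1 <= i)%N -> (i <= j)%N -> (j <= D)%N -> ~~ lp_support i j -> F i j = 0) ->
  lp_sum D F = F 1%N D + F 2%N D.
Proof.
move=> D2 F0; rewrite /lp_sum.
have row_last i : (1 <= i <= D)%N -> \sum_(i <= j < D.+1) F i j = F i D.
  move=> /andP[i1 iD]; rewrite big_nat_recr //= big_nat_cond big1 ?add0r //.
  by move=> j /andP[/andP[ij jD] _]; apply: F0; rewrite /lp_support; lia.
rewrite (eq_big_nat _ _ (F2 := fun i => F i D)) => [|i /andP[i1 iD]]; last first.
  by apply: row_last; lia.
rewrite big_ltn; last lia.
rewrite big_ltn; last lia.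
rewrite addrA big_nat_cond big1 ?addr0 // => i /andP[/andP[i3 iD] _].
by apply: F0; rewrite /lp_support; lia.
Qed.

End LpSum.

Section Duality.
Variable R : realFieldType.

Definition dual_slack (y1 y2 : R) (i j : nat) : R :=
  y1 * ((i%:R)^-1 + (j%:R)^-1) + y2 - (i%:R - j%:R) ^+ 2.

Lemma lp_objective_dual D n (m : nat -> nat -> R) y1 y2 : lp_feasible D n m ->
  lp_objective D m =
  y1 * n%:R + y2 * (n%:R - 1) - lp_sum D (fun i j => dual_slack y1 y2 i j * m i j).
Proof.
case=> weighted_sum edge_sum _.
rewrite -edge_sum -weighted_sum -!lp_sumZ -lp_sumD -lp_sumB /lp_objective.
by apply: eq_lp_sum => i j _ _ _; rewrite /dual_slack; ring.
Qed.

Lemma lp_objective_le_dual D n (m : nat -> nat -> R) y1 y2 : lp_feasible D n m ->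
  (forall i j, (1 <= i)%N -> (i <= j)%N -> (j <= D)%N -> 0 <= dual_slack y1 y2 i j) ->
  lp_objective D m <= y1 * n%:R + y2 * (n%:R - 1).
Proof.
move=> feas slack_ge0; rewrite (lp_objective_dual y1 y2 feas) lerBlDr lerDl.
apply: lp_sum_ge0 => i j i1 ij jD; apply: mulr_ge0; first exact: slack_ge0.
by case: feas => _ _; apply.
Qed.

Lemma complementary_slackness D n (m : nat -> nat -> R) y1 y2 : lp_feasible D n m ->
  (forall i j, (1 <= i)%N -> (i <= j)%N -> (j <= D)%N -> 0 <= dual_slack y1 y2 i j) ->
  lp_objective D m = y1 * n%:R + y2 * (n%:R - 1) ->
  forall i j, (1 <= i)%N -> (i <= j)%N -> (j <= D)%N -> dual_slack y1 y2 i j * m i j = 0.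
Proof.
move=> feas slack_ge0; rewrite (lp_objective_dual y1 y2 feas) -[X in _ = X]subr0 => /subrI.
apply: lp_sum_eq0P.
move=> i j i1 ij jD; apply: mulr_ge0; first exact: slack_ge0.
by case: feas => _ _; apply.
Qed.

End Duality.

Section DualCertificate.
Variable R : realFieldType.
Implicit Types D i j : nat.

(* Chosen so that the slacks at (1, D) and (2, D) vanish: subtracting these two
   equations gives y1 / 2 = (D - 1)^2 - (D - 2)^2. *)
Definition opt_dual1 D : R := 4 * D%:R - 6.
Definition opt_dual2 D : R := (D%:R - 1) ^+ 2 - (1 + D%:R^-1) * opt_dual1 D.
Definition opt_slack D : nat -> nat -> R := dual_slack (opt_dual1 D) (opt_dual2 D).

Lemma opt_slack_support D i j : (0 < D)%N -> lp_support D i j -> opt_slack D i j = 0.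
Proof.
move=> D0 /andP[/orP[]/eqP-> /eqP->].
all: by rewrite /opt_slack /dual_slack /opt_dual2 /opt_dual1; field; rewrite pnatr_eq0 -lt0n.
Qed.

(* For 1 <= i <= j <= D all three summands are nonnegative; the first vanishes
   only for i <= 2 (once D >= 4), the second only for j = D. *)
Lemma opt_slackE D i j : (0 < i)%N -> (0 < j)%N -> (0 < D)%N ->
  opt_slack D i j =
    (i%:R - 1) * (i%:R - 2) * (2 * D%:R - i%:R - 3) / i%:R
  + (4 * D%:R - 6) * (D%:R - j%:R) / (j%:R * D%:R)
  + (D%:R - j%:R) * (D%:R + j%:R - 2 * i%:R).
Proof.
move=> i0 j0 D0; rewrite /opt_slack /dual_slack /opt_dual2 /opt_dual1.
by field; rewrite !pnatr_eq0 -!lt0n i0 j0 D0.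
Qed.

Lemma opt_slack_head_ge0 D i : (3 <= D)%N -> (1 <= i <= D)%N ->
  0 <= (i%:R - 1) * (i%:R - 2) * (2 * D%:R - i%:R - 3) / i%:R :> R.
Proof.
move=> D3 /andP[i1 iD]; have [i_le2|i_ge3] := leqP i 2.
  have: (i == 1) || (i == 2)%N by lia.
  by case/orP=> /eqP->; rewrite subrr ?mulr0 !mul0r.
have xi : 3 <= i%:R :> R by rewrite (ler_nat R 3).
have xiD : i%:R <= D%:R :> R by rewrite ler_nat.
by apply: divr_ge0; [apply: mulr_ge0; [apply: mulr_ge0|]|]; lra.
Qed.

Lemma opt_slack_ge0 D i j : (3 <= D)%N -> (1 <= i)%N -> (i <= j)%N -> (j <= D)%N ->
  0 <= opt_slack D i j.
Proof.
move=> D3 i1 ij jD; rewrite opt_slackE; try lia.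
have xij : i%:R <= j%:R :> R by rewrite ler_nat.
have xjD : j%:R <= D%:R :> R by rewrite ler_nat.
have xj : 1 <= j%:R :> R by rewrite ler1n; lia.
have xD : 3 <= D%:R :> R by rewrite (ler_nat R 3).
apply: addr_ge0; last by apply: mulr_ge0; lra.
apply: addr_ge0; first by apply: opt_slack_head_ge0; lia.
by apply: divr_ge0; apply: mulr_ge0; lra.
Qed.

Lemma opt_slack_gt0 D i j : (4 <= D)%N -> (1 <= i)%N -> (i <= j)%N -> (j <= D)%N ->
  ~~ lp_support D i j -> 0 < opt_slack D i j.
Proof.
move=> D4 i1 ij jD off_support; rewrite opt_slackE; try lia.
have xij : i%:R <= j%:R :> R by rewrite ler_nat.
have xjD : j%:R <= D%:R :> R by rewrite ler_nat.
have xj : 1 <= j%:R :> R by rewrite ler1n; lia.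
have xD : 4 <= D%:R :> R by rewrite (ler_nat R 4).
have tail_ge0 : 0 <= (D%:R - j%:R) * (D%:R + j%:R - 2 * i%:R) :> R.
  by apply: mulr_ge0; lra.
have [j_ltD|j_geD] := ltnP j D.
  have xj_ltD : j%:R < D%:R :> R by rewrite ltr_nat.
  have mid_gt0 : 0 < (4 * D%:R - 6) * (D%:R - j%:R) / (j%:R * D%:R) :> R.
    by apply: divr_gt0; apply: mulr_gt0; lra.
  by have := @opt_slack_head_ge0 D i ltac:(lia) ltac:(lia); lra.
have xi : 3 <= i%:R :> R by rewrite (ler_nat R 3); move: off_support; rewrite /lp_support; lia.
have head_gt0 : 0 < (i%:R - 1) * (i%:R - 2) * (2 * D%:R - i%:R - 3) / i%:R :> R.
  by apply: divr_gt0; [apply: mulr_gt0; [apply: mulr_gt0|]|]; lra.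
have -> : j = D by lia.
by rewrite subrr mul0r mulr0 mul0r !addr0.
Qed.

End DualCertificate.

Section OptimalSolution.
Variable R : realFieldType.
Implicit Types (D n i j : nat) (m : nat -> nat -> R).

Lemma lp_opt_off_support D n i j : ~~ lp_support D i j -> lp_opt R D n i j = 0.
Proof. by rewrite /lp_opt /lp_support; case: eqP; case: eqP => //=; case: eqP. Qed.

Lemma lp_opt_1D D n : lp_opt R D n 1 D = ((D%:R - 2) * n%:R + (D%:R + 2)) / D%:R.
Proof. by rewrite /lp_opt !eqxx. Qed.

Lemma lp_opt_2D D n : lp_opt R D n 2 D = 2 * (n%:R - D%:R - 1) / D%:R.
Proof. by rewrite /lp_opt !eqxx. Qed.

Lemma lp_opt_feasible D n : (2 <= D)%N -> (D < n)%N -> lp_feasible D n (lp_opt R D n).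
Proof.
move=> D2 Dn; have xD0 : D%:R != 0 :> R by rewrite pnatr_eq0; lia.
have xD : 2 <= D%:R :> R by rewrite (ler_nat R 2).
have xn : D%:R + 1 <= n%:R :> R by rewrite natr1 ler_nat.
split.
- rewrite lp_sum_support // => [|i j _ _ _ /lp_opt_off_support->]; last by rewrite mulr0.
  by rewrite lp_opt_1D lp_opt_2D; field.
- rewrite lp_sum_support // => [|i j _ _ _ /lp_opt_off_support//].
  by rewrite lp_opt_1D lp_opt_2D; field.
- move=> i j _ _ _.
  have [/andP[/orP[]/eqP-> /eqP->]|/lp_opt_off_support-> //] := boolP (lp_support D i j).
  + by rewrite lp_opt_1D; apply: divr_ge0; nra.
  + by rewrite lp_opt_2D; apply: divr_ge0; lra.
Qed.

Lemma lp_feasible_support_eq_opt D n m : (2 <= D)%N -> lp_feasible D n m ->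
  (forall i j, (1 <= i)%N -> (i <= j)%N -> (j <= D)%N -> ~~ lp_support D i j -> m i j = 0) ->
  forall i j, (1 <= i)%N -> (i <= j)%N -> (j <= D)%N -> m i j = lp_opt R D n i j.
Proof.
move=> D2 [weighted_sum edge_sum _] m_off i j i1 ij jD.
have xD0 : D%:R != 0 :> R by rewrite pnatr_eq0; lia.
rewrite lp_sum_support // in edge_sum.
move: weighted_sum; rewrite lp_sum_support // => [weighted_sum|k l k1 kl lD]; last first.
  by move/(m_off k l k1 kl lD)->; rewrite mulr0.
have xDV : D%:R * D%:R^-1 = 1 :> R by rewrite mulfV.
have m1D : m 1%N D = n%:R - 1 - m 2%N D by lra.
have m2D : m 2%N D = lp_opt R D n 2 D.
  by move: weighted_sum; rewrite invr1 m1D lp_opt_2D; lra.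
have [/andP[/orP[]/eqP-> /eqP->] //|off] := boolP (lp_support D i j).
  by rewrite m1D m2D lp_opt_1D lp_opt_2D; field.
by rewrite lp_opt_off_support // m_off.
Qed.

Lemma lp_objective_opt D n : (2 <= D)%N -> (D < n)%N ->
  lp_objective D (lp_opt R D n) = opt_dual1 R D * n%:R + opt_dual2 R D * (n%:R - 1).
Proof.
move=> D2 Dn; have feas := lp_opt_feasible D2 Dn.
rewrite (lp_objective_dual (opt_dual1 R D) (opt_dual2 R D) feas) -/(opt_slack R D).
rewrite lp_sum_support // => [|i j _ _ _ /lp_opt_off_support->]; last by rewrite mulr0.
have supp1 : lp_support D 1%N D by rewrite /lp_support !eqxx.
have supp2 : lp_support D 2%N D by rewrite /lp_support !eqxx orbT.
by rewrite !opt_slack_support ?mul0r ?addr0 ?subr0 //; lia.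
Qed.

End OptimalSolution.

Theorem theorem3p2 (R : realFieldType) (D n : nat) :
  (4 <= D)%N -> (D + 2 <= n)%N ->
  lp_feasible D n (lp_opt R D n) /\
  (forall m : nat -> nat -> R, lp_feasible D n m ->
     lp_objective D m <= lp_objective D (lp_opt R D n) /\
     (lp_objective D m = lp_objective D (lp_opt R D n) ->
        forall i j : nat, (1 <= i)%N -> (i <= j)%N -> (j <= D)%N ->
          m i j = lp_opt R D n i j)).
Proof.
move=> D4 Dn; have D2 : (2 <= D)%N by lia.
have {}Dn : (D < n)%N by lia.
have slack_ge0 i j : (1 <= i)%N -> (i <= j)%N -> (j <= D)%N -> 0 <= opt_slack R D i j.
  by apply: opt_slack_ge0; lia.
split=> [|m feas]; first exact: lp_opt_feasible.
rewrite lp_objective_opt //; split; first exact: lp_objective_le_dual.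
move=> opt_m; apply: lp_feasible_support_eq_opt => // i j i1 ij jD off.
have /eqP := complementary_slackness feas slack_ge0 opt_m i1 ij jD.
by rewrite mulf_eq0 gt_eqF ?opt_slack_gt0 // => /eqP.
Qed.
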